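(* Let $0<\alpha<1$, $K_0>1$, and let $F=(F_1,F_2)$ be a $C^1$ map defined near a point $z\in\mathbb R^2$ with $DF_z$ invertible, such that at $z$: (H1) $|F_{2x}|+\alpha|F_{2y}|+\alpha^2|F_{1y}|\le\alpha|F_{1x}|$; (H2) $|F_{1x}|-\alpha|F_{1y}|\ge K_0$; (H3) $|F_{1y}|+\alpha|F_{2y}|+\alpha^2|F_{2x}|\le\alpha|F_{1x}|$; (H4) $|F_{1x}|-\alpha|F_{2x}|\ge J_F(z)K_0$, where $J_F(z)=|F_{1x}F_{2y}-F_{1y}F_{2x}|$. Then, with $K^u_\alpha=\{(v_1,v_2):|v_2|\le\alpha|v_1|\}$, $K^s_\alpha=\{(v_1,v_2):|v_1|\le\alpha|v_2|\}$ and the max norm $|(v_1,v_2)|=\max(|v_1|,|v_2|)$: $DF_z(K^u_\alpha)\subseteq K^u_\alpha$; $|DF_zv|\ge K_0|v|$ for $v\in K^u_\alpha$; $DF_z^{-1}(K^s_\alpha)\subseteq K^s_\alpha$; and $|DF_z^{-1}v|\ge K_0|v|$ for $v\in K^s_\alpha$.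
   Context: All partial derivatives are evaluated at $z$. Tangent spaces are identified with $\mathbb R^2$. *)

From HB Require Import structures.
From mathcomp Require Import all_boot all_order all_algebra.
From mathcomp Require Import all_classical all_reals all_analysis.
Set Implicit Arguments. Unset Strict Implicit. Unset Printing Implicit Defensive.
Import Order.TTheory GRing.Theory Num.Theory.
Import numFieldNormedType.Exports.
Local Open Scope ring_scope.

(* Partial derivatives of F = (F1,F2) : R^2 -> R^2 at p:
   dX F p = (F1x, F2x),  dY F p = (F1y, F2y). *)
Definition dX {R : realType} (F : R * R -> R * R) (p : R * R) : R * R :=
  'D_((1, 0) : R * R) F p.
Definition dY {R : realType} (F : R * R -> R * R) (p : R * R) : R * R :=
  'D_((0, 1) : R * R) F p.

Definition C1_near {R : realType} (F : R * R -> R * R) (z : R * R) : Prop :=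
  exists e : R, 0 < e /\
    forall p : R * R, ball z e p ->
      derivable F p ((1, 0) : R * R) /\ derivable F p ((0, 1) : R * R) /\
      {for p, continuous (dX F)} /\ {for p, continuous (dY F)}.

Definition DF {R : realType} (F : R * R -> R * R) (z : R * R) (v : R * R) : R * R :=
  (v.1 * (dX F z).1 + v.2 * (dY F z).1, v.1 * (dX F z).2 + v.2 * (dY F z).2).

Definition JF {R : realType} (F : R * R -> R * R) (z : R * R) : R :=
  `|(dX F z).1 * (dY F z).2 - (dY F z).1 * (dX F z).2|.

Definition maxnorm {R : realType} (v : R * R) : R := Num.max `|v.1| `|v.2|.

Definition Ku {R : realType} (alpha : R) : set (R * R) :=
  [set v | `|v.2| <= alpha * `|v.1|].
Definition Ks {R : realType} (alpha : R) : set (R * R) :=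
  [set v | `|v.1| <= alpha * `|v.2|].

From HB Require Import structures.
From mathcomp Require Import all_boot all_order all_algebra.
From mathcomp Require Import all_classical all_reals all_analysis.
From mathcomp Require Import ring lra.
Set Implicit Arguments.
Unset Strict Implicit.
Unset Printing Implicit Defensive.

Import Order.TTheory GRing.Theory Num.Theory.
Import numFieldNormedType.Exports.
Local Open Scope ring_scope.

(* After swapping the two coordinates, DF_z^-1 has
   matrix [[F1x, -F2x], [-F1y, F2y]] / det, and (H3), (H4) are exactly (H1),
   (H2) for that matrix; so the stable-cone statements are the unstable-cone
   statements for DF_z^-1. *)

Definition lin2 {R : pzRingType} (a b c d : R) (v : R * R) : R * R :=
  (v.1 * a + v.2 * b, v.1 * c + v.2 * d).

Lemma lin2_inj_det_neq0 (R : comNzRingType) (a b c d : R) :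
  injective (lin2 a b c d) -> a * d - b * c != 0.
Proof.
move=> lin_inj; apply/eqP => det0.
(* When det = 0, the columns of the adjugate matrix lie in the kernel. *)
have ker v : lin2 a b c d v = (0, 0) -> v = (0, 0).
  by move=> v0; apply: lin_inj; rewrite v0 /lin2 /= !mul0r addr0.
have [/eqP] : (- b, a) = (0, 0).
  by apply: ker; rewrite /lin2 /=; congr pair; [ring | rewrite -det0; ring].
rewrite oppr_eq0 => /eqP b0 a0.
have [d0 /eqP] : (d, - c) = (0, 0).
  by apply: ker; rewrite /lin2 /=; congr pair; [rewrite -det0; ring | ring].
rewrite oppr_eq0 => /eqP c0.
have [/eqP] : (1, 0) = (0, 0) :> R * R.
  by apply: ker; rewrite /lin2 /= a0 c0 !(mulr0, mul0r, addr0).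
by rewrite oner_eq0.
Qed.

Section UnstableCone.
Variables (R : realFieldType) (alpha a b c d : R) (v : R * R).
Hypothesis v_cone : `|v.2| <= alpha * `|v.1|.

Let w := lin2 a b c d v.

Let norm_w1_ge : `|v.1| * `|a| - `|v.2| * `|b| <= `|w.1|.
Proof. by rewrite -!normrM lerB_normD. Qed.

Lemma lin2_cone_stable :
  0 < alpha -> `|c| + alpha * `|d| + alpha ^+ 2 * `|b| <= alpha * `|a| ->
  `|w.2| <= alpha * `|w.1|.
Proof.
move=> alpha_gt0 dom.
(* |w.2| <= |v.1| (|c| + alpha |d|) <= alpha |v.1| (|a| - alpha |b|) <= alpha |w.1| *)
have norm_w2_le : `|w.2| <= `|v.1| * `|c| + `|v.2| * `|d|.
  by rewrite -!normrM ler_normD.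
have := ler_wpM2r (normr_ge0 d) v_cone.
have := ler_wpM2r (normr_ge0 b) v_cone.
have := ler_wpM2l (normr_ge0 v.1) dom.
have := ler_wpM2l (ltW alpha_gt0) norm_w1_ge.
move: norm_w2_le; rewrite -/w.
move: `|v.1| `|v.2| `|a| `|b| `|c| `|d| `|w.1| `|w.2| => *; nra.
Qed.

Lemma lin2_cone_expand (K : R) :
  alpha <= 1 -> K <= `|a| - alpha * `|b| ->
  K * Num.max `|v.1| `|v.2| <= Num.max `|w.1| `|w.2|.
Proof.
move=> alpha_le1 dom.
have -> : Num.max `|v.1| `|v.2| = `|v.1|.
  by apply/max_idPl; apply: le_trans v_cone _; rewrite ler_piMl.
rewrite le_max; apply/orP; left; apply: le_trans norm_w1_ge.
have := ler_wpM2r (normr_ge0 b) v_cone.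
have := ler_wpM2l (normr_ge0 v.1) dom.
move: `|v.1| `|v.2| `|a| `|b| => *; nra.
Qed.

End UnstableCone.

Lemma lin2_inv_swap (R : fieldType) (a b c d : R) (v : R * R) :
  let det := a * d - b * c in let w := lin2 a b c d v in
  det != 0 ->
  (v.2, v.1) = lin2 (a / det) (- c / det) (- b / det) (d / det) (w.2, w.1).
Proof. by case: v => v1 v2 /= det_neq0; rewrite /lin2 /=; congr pair; field. Qed.

Section StableCone.
Variables (R : realFieldType) (alpha a b c d : R) (v : R * R).
Hypothesis det_neq0 : a * d - b * c != 0.

Let w := lin2 a b c d v.
Let det := a * d - b * c.
Hypothesis w_cone : `|w.1| <= alpha * `|w.2|.

Let det_norm_gt0 : 0 < `|det|. Proof. by rewrite normr_gt0. Qed.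

Lemma lin2_inv_cone_stable :
  0 < alpha -> `|b| + alpha * `|d| + alpha ^+ 2 * `|c| <= alpha * `|a| ->
  `|v.1| <= alpha * `|v.2|.
Proof.
move=> alpha_gt0 dom.
change (`|(v.2, v.1).2| <= alpha * `|(v.2, v.1).1|).
rewrite (lin2_inv_swap v det_neq0); apply: lin2_cone_stable => //.
by rewrite !normf_div !normrN !mulrA -!mulrDl ler_pM2r ?invr_gt0.
Qed.

Lemma lin2_inv_cone_expand (K : R) :
  alpha <= 1 -> `|det| * K <= `|a| - alpha * `|c| ->
  K * Num.max `|w.1| `|w.2| <= Num.max `|v.1| `|v.2|.
Proof.
move=> alpha_le1 dom.
rewrite maxC [Num.max `|v.1| _]maxC.
change (K * Num.max `|(w.2, w.1).1| `|(w.2, w.1).2|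
        <= Num.max `|(v.2, v.1).1| `|(v.2, v.1).2|).
rewrite (lin2_inv_swap v det_neq0).
apply: (lin2_cone_expand (alpha := alpha)) => //.
by rewrite !normf_div !normrN mulrA -mulrBl ler_pdivlMr // mulrC.
Qed.

End StableCone.

Theorem proposition2p1 (R : realType) (alpha K0 : R) (F : R * R -> R * R) (z : R * R) :
  0 < alpha -> alpha < 1 -> 1 < K0 ->
  C1_near F z ->
  bijective (DF F z) ->
  (* H1 *) `|(dX F z).2| + alpha * `|(dY F z).2| + alpha ^+ 2 * `|(dY F z).1|
             <= alpha * `|(dX F z).1| ->
  (* H2 *) `|(dX F z).1| - alpha * `|(dY F z).1| >= K0 ->
  (* H3 *) `|(dY F z).1| + alpha * `|(dY F z).2| + alpha ^+ 2 * `|(dX F z).2|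
             <= alpha * `|(dX F z).1| ->
  (* H4 *) `|(dX F z).1| - alpha * `|(dX F z).2| >= JF F z * K0 ->
  (forall v, Ku alpha v -> Ku alpha (DF F z v)) /\
  (forall v, Ku alpha v -> maxnorm (DF F z v) >= K0 * maxnorm v) /\
  (forall w, Ks alpha w -> forall v, DF F z v = w -> Ks alpha v) /\
  (forall w, Ks alpha w -> forall v, DF F z v = w -> maxnorm v >= K0 * maxnorm w).
Proof.
rewrite /Ku /Ks /maxnorm /JF => alpha_gt0 alpha_lt1 _ _ /bij_inj + H1 H2 H3 H4.
have -> : DF F z = lin2 (dX F z).1 (dY F z).1 (dX F z).2 (dY F z).2 by [].
move: (dX F z) (dY F z) H1 H2 H3 H4 => [a c] [b d] /= H1 H2 H3 H4 DF_inj.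
have det_neq0 := lin2_inj_det_neq0 DF_inj.
have alpha_le1 := ltW alpha_lt1.
split; [|split; [|split]].
- by move=> v v_cone; apply: lin2_cone_stable.
- by move=> v v_cone; apply: (lin2_cone_expand (alpha := alpha)).
- move=> w w_cone v vw; rewrite -vw in w_cone.
  exact: (lin2_inv_cone_stable det_neq0 w_cone alpha_gt0 H3).
- move=> w w_cone v vw; rewrite -vw in w_cone *.
  exact: (lin2_inv_cone_expand det_neq0 w_cone alpha_le1 H4).
Qed.
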